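(* Let $I$ and $J$ be big intervals. The following are equivalent: (1) there is an order-preserving injection $f:I\to J$; (2) there is a (topologically) dense subset $A\subset I$ and an order-preserving injection $h:A\to J$; (3) there is an order-preserving surjection $g:J\to I$.
   Context: A big interval is a totally ordered set, endowed with the order topology, which is compact and connected; equivalently, a totally ordered set which is order complete (every nonempty subset has a supremum), dense (between any two distinct elements there is a third), and has a minimal element $0_I$ and a maximal element $1_I$. A map between totally ordered sets is order-preserving if $s\le t$ implies $f(s)\le f(t)$. *)

From HB Require Import structures.
From mathcomp Require Import all_boot all_order.
Set Implicit Arguments. Unset Strict Implicit. Unset Printing Implicit Defensive.
Import Order.TTheory.
Local Open Scope order_scope.

Section BigInterval.
Context {d : Order.disp_t} (T : orderType d).

Definition is_sup (S : T -> Prop) (s : T) : Prop :=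
  (forall x, S x -> x <= s) /\
  (forall u, (forall x, S x -> x <= u) -> s <= u).

Definition order_complete : Prop :=
  forall S : T -> Prop, (exists x, S x) -> exists s, is_sup S s.

Definition order_dense : Prop :=
  forall x y : T, x < y -> exists z, x < z /\ z < y.

Definition big_interval : Prop :=
  [/\ order_complete, order_dense,
      exists m : T, forall x, m <= x
    & exists M : T, forall x, x <= M].

Definition basic_open (B : T -> Prop) : Prop :=
  (exists a b : T, forall x, B x <-> (a < x /\ x < b)) \/
  (exists b : T, forall x, B x <-> x < b) \/
  (exists a : T, forall x, B x <-> a < x) \/
  (forall x, B x).

Definition order_open (U : T -> Prop) : Prop :=
  forall x, U x -> exists B, basic_open B /\ B x /\ (forall y, B y -> U y).

Definition top_dense (A : T -> Prop) : Prop :=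
  forall U, order_open U -> (exists x, U x) -> exists x, U x /\ A x.

End BigInterval.

Definition order_preserving {d1 d2 : Order.disp_t}
  {S : porderType d1} {T : porderType d2} (f : S -> T) : Prop :=
  forall s t : S, s <= t -> f s <= f t.

Definition surjective {A B : Type} (f : A -> B) : Prop := forall b, exists a, f a = b.

From HB Require Import structures.
From mathcomp Require Import all_boot all_order.
From Stdlib Require Import ClassicalEpsilon.
Import Order.TTheory.
Local Open Scope order_scope.

(* All maps are built as suprema in a complete target (adjoining the bottom
   element only to make the sets nonempty).
   (2) -> (1): f x := sup {h a | a <= x}; density of A puts two of its points
   strictly between x < y, and their distinct h-values separate f x from f y.
   (1) -> (3): g y := sup {x | f x <= y} is a left inverse of f.
   (3) -> (1): f x := sup g^-1(x); a point strictly between x < x' has a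
   g-preimage separating f x from f x'. *)

Lemma choice_fun {A B : Type} (R : A -> B -> Prop) :
  (forall a, exists b, R a b) -> exists f : A -> B, forall a, R a (f a).
Proof.
move=> HR; exists (fun a => proj1_sig (constructive_indefinite_description _ (HR a))).
by move=> a; exact: proj2_sig (constructive_indefinite_description _ (HR a)).
Qed.

Section Suprema.
Context {d : Order.disp_t} {T : orderType d}.

Lemma sup_ge {S : T -> Prop} {s x} : is_sup S s -> S x -> x <= s.
Proof. by move=> [ub _]; apply: ub. Qed.

Lemma sup_le {S : T -> Prop} {s u} : is_sup S s -> (forall x, S x -> x <= u) -> s <= u.
Proof. by move=> [_ least]; apply: least. Qed.

Lemma le_sup (S S' : T -> Prop) s s' :
  is_sup S s -> is_sup S' s' -> (forall x, S x -> S' x) -> s <= s'.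
Proof. by move=> supS supS' sub; apply: (sup_le supS) => x /sub; apply: sup_ge. Qed.

Lemma sup_family {A : Type} (S : A -> T -> Prop) :
  order_complete T -> (forall a, exists x, S a x) ->
  exists f : A -> T, forall a, is_sup (S a) (f a).
Proof.
by move=> complete ne; apply: (choice_fun (fun a => is_sup (S a))) => a; apply: complete.
Qed.

Lemma top_dense_between {A : T -> Prop} : order_dense T -> top_dense A ->
  forall x y, x < y -> exists2 a, A a & x < a < y.
Proof.
move=> dense denseA x y xy.
have open_xy : order_open (fun z => x < z < y).
  move=> z xzy; exists (fun z => x < z < y); split=> //.
  by left; exists x, y => w; split=> /andP.
have [z [xz zy]] := dense _ _ xy.
have /(denseA _ open_xy)[a [xay Aa]] : exists z, x < z < y by exists z; rewrite xz zy.
by exists a.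
Qed.

End Suprema.

Section Monotone.
Context {d1 d2 : Order.disp_t} {I : orderType d1} {J : orderType d2}.

Lemma order_preserving_injective_of_lt (f : I -> J) :
  {homo f : x y / x < y} -> order_preserving f /\ injective f.
Proof. by move=> /le_mono fmono; split=> [x y|]; [rewrite fmono | apply: inc_inj]. Qed.

Lemma order_preserving_lt_reflect {g : J -> I} :
  order_preserving g -> forall a b, g a < g b -> a < b.
Proof. by move=> gmono a b; apply: contraTT; rewrite -!leNgt => /gmono. Qed.

End Monotone.

Section Constructions.
Context {d1 d2 : Order.disp_t} {I : orderType d1} {J : orderType d2}.

Lemma restrict_to_top_dense (f : I -> J) :
  order_preserving f -> injective f ->
  exists A : I -> Prop, top_dense A /\
    exists h : {x : I | A x} -> J,
      (forall s t : {x : I | A x}, proj1_sig s <= proj1_sig t -> h s <= h t)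
      /\ injective h.
Proof.
move=> fmono finj; exists (fun _ => True); split; first by move=> U _ [x Ux]; exists x.
exists (fun s => f (proj1_sig s)); split=> [s t /fmono //|].
by move=> [s []] [t []] /= /finj ->.
Qed.

Lemma extend_from_top_dense (A : I -> Prop) (h : {x : I | A x} -> J) (bot : J) :
  order_dense I -> order_complete J -> (forall y, bot <= y) -> top_dense A ->
  (forall s t : {x : I | A x}, proj1_sig s <= proj1_sig t -> h s <= h t) ->
  injective h ->
  exists f : I -> J, order_preserving f /\ injective f.
Proof.
move=> denseI completeJ botP denseA hmono hinj.
pose below x y : Prop := y = bot \/ exists2 a : {x | A x}, proj1_sig a <= x & h a = y.
have [f fsup] : exists f : I -> J, forall x, is_sup (below x) (f x).
  by apply: sup_family => // x; exists bot; left.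
exists f; apply: order_preserving_injective_of_lt => x y xy.
have [a Aa /andP[xa ay]] := top_dense_between denseI denseA _ _ xy.
have [b Ab /andP[ab b_lt_y]] := top_dense_between denseI denseA _ _ ay.
have le_fx_a : f x <= h (exist A a Aa).
  apply: (sup_le (fsup x)) => _ [->|[c cx <-]]; first exact: botP.
  by apply: hmono; apply: le_trans cx (ltW xa).
have lt_a_b : h (exist A a Aa) < h (exist A b Ab).
  rewrite lt_neqAle hmono ?(ltW ab) // andbT; apply: contraTneq ab.
  by move=> /hinj [->]; rewrite ltxx.
have le_b_fy : h (exist A b Ab) <= f y.
  by apply: (sup_ge (fsup y)); right; exists (exist A b Ab) => //=; apply: ltW b_lt_y.
exact: le_lt_trans le_fx_a (lt_le_trans lt_a_b le_b_fy).
Qed.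

Lemma surjection_of_injection (f : I -> J) (bot : I) :
  order_complete I -> (forall x, bot <= x) ->
  order_preserving f -> injective f ->
  exists g : J -> I, order_preserving g /\ surjective g.
Proof.
move=> completeI botP fmono finj.
have flt : {homo f : x y / x < y} := inj_homo_lt finj fmono.
pose lower y x := x = bot \/ f x <= y.
have [g gsup] : exists g : J -> I, forall y, is_sup (lower y) (g y).
  by apply: sup_family => // y; exists bot; left.
exists g; split=> [y y' yy'|x].
  by apply: le_sup (gsup y) (gsup y') _ => z [->|fz]; [left | right; apply: le_trans yy'].
exists (f x); apply/eqP; rewrite eq_le (sup_ge (gsup _)) ?andbT; last by right.
apply: (sup_le (gsup _)) => z [->|fzx]; first exact: botP.
by rewrite leNgt; apply: contraTN fzx => /flt; rewrite ltNge.
Qed.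

Lemma injection_of_surjection (g : J -> I) :
  order_dense I -> order_complete J -> order_preserving g -> surjective g ->
  exists f : I -> J, order_preserving f /\ injective f.
Proof.
move=> denseI completeJ gmono gsurj.
have glt := order_preserving_lt_reflect gmono.
have [f fsup] : exists f : I -> J, forall x, is_sup (fun y => g y = x) (f x).
  by apply: sup_family => // x; apply: gsurj.
exists f; apply: order_preserving_injective_of_lt => x x' xx'.
have [z [xz zx']] := denseI _ _ xx'.
have [y gy] := gsurj z; have [y' gy'] := gsurj x'.
have le_fx_y : f x <= y.
  by apply: (sup_le (fsup x)) => w gw; apply/ltW/glt; rewrite gw gy.
have lt_y_fx' : y < f x'.
  by apply: lt_le_trans (sup_ge (fsup x') gy'); apply: glt; rewrite gy gy'.
exact: le_lt_trans le_fx_y lt_y_fx'.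
Qed.

End Constructions.

Theorem mainTheorem1 (d1 d2 : Order.disp_t) (I : orderType d1) (J : orderType d2) :
  big_interval I -> big_interval J ->
  ((exists f : I -> J, order_preserving f /\ injective f) <->
   (exists A : I -> Prop, top_dense A /\
      exists h : {x : I | A x} -> J,
        (forall s t : {x : I | A x}, proj1_sig s <= proj1_sig t -> h s <= h t)
        /\ injective h)) /\
  ((exists f : I -> J, order_preserving f /\ injective f) <->
   (exists g : J -> I, order_preserving g /\ surjective g)).
Proof.
move=> [completeI denseI [botI botIP] _] [completeJ _ [botJ botJP] _].
split; split.
- by move=> [f [fmono finj]]; apply: restrict_to_top_dense fmono finj.
- move=> [A [denseA [h [hmono hinj]]]].
  exact: extend_from_top_dense denseI completeJ botJP denseA hmono hinj.
- by move=> [f [fmono finj]]; apply: surjection_of_injection completeI botIP fmono finj.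
- by move=> [g [gmono gsurj]]; apply: injection_of_surjection denseI completeJ gmono gsurj.
Qed.
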